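(* Assume $\mathrm{char}(\mathbb{F})=p>0$ and $\deg h\ge1$, regard $A_h\subseteq A_1$ via $x\mapsto x$, $\hat y\mapsto yh$, and let $c\in C_{A_h}(x)=\mathbb{F}[x,h^py^p]$. Then there is an injective $\mathbb{F}$-algebra homomorphism $\kappa_c:A_h\to A_h$ with $\kappa_c(\hat y)=\hat y+c$ and $\kappa_c(r)=r$ for all $r\in\mathbb{F}[x]$. If $c\notin\mathbb{F}[x]$, then $\kappa_c$ is not an automorphism of $A_h$.
   Context: For $h\in\mathbb{F}[x]$, $A_h$ is the unital associative $\mathbb{F}$-algebra generated by $x,\hat y$ with defining relation $\hat yx-x\hat y=h$. $A_1$ is the Weyl algebra, generated by $x,y$ with $yx-xy=1$; for $h\ne0$, $x\mapsto x,\hat y\mapsto yh$ embeds $A_h$ into $A_1$, and $h^py^p\in A_h$. $C_{A_h}(x)=\{a\in A_h: ax=xa\}$. *)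

From HB Require Import structures.
From mathcomp Require Import all_boot all_order all_algebra.
Set Implicit Arguments. Unset Strict Implicit. Unset Printing Implicit Defensive.
Import GRing.Theory.
Local Open Scope ring_scope.

Definition pev (F : fieldType) (A : algType F) (r : {poly F}) (a : A) : A :=
  horner_alg a r.

Definition is_alg_hom (F : fieldType) (A B : algType F) (f : A -> B) : Prop :=
  [/\ forall a b, f (a + b) = f a + f b,
      forall a b, f (a * b) = f a * f b,
      f 1 = 1 &
      forall (k : F) a, f (k *: a) = k *: f a].

(* (A, x, yh) is the F-algebra A_h: generated by x, yh with the single
   defining relation  yh x - x yh = h(x), i.e. it satisfies the universal
   property of this presentation. *)
Definition is_Ah (F : fieldType) (h : {poly F}) (A : algType F) (x yh : A) : Prop :=
  yh * x - x * yh = pev h x /\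
  forall (B : algType F) (u v : B), v * u - u * v = pev h u ->
    (exists f : A -> B, is_alg_hom f /\ f x = u /\ f yh = v) /\
    (forall f g : A -> B, is_alg_hom f -> is_alg_hom g ->
       f x = g x -> f yh = g yh -> forall a, f a = g a).

From HB Require Import structures.
From mathcomp Require Import all_boot all_order all_algebra.
From mathcomp Require Import boolp.
From mathcomp Require Import ring zify.
Set Implicit Arguments. Unset Strict Implicit. Unset Printing Implicit Defensive.
Import GRing.Theory.
Local Open Scope ring_scope.

(* The proof rests on a normal form.  Every a in A_h is uniquely
   Phi P = sum_i P_i(x) yh^i  with P in F[x][Y]  (Phi_bijective, a
   Poincare-Birkhoff-Witt statement).  Existence of the inverse comes from a
   model: x and yh act on F[x][Y] by  P |-> xP  and  P |-> h dP/dx + PY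
   (Xop, Dop); these satisfy the defining relation, so the universal property
   yields a representation rho of A_h, and a |-> rho a 1 inverts Phi.  Leading
   terms multiply (Phi_mul_lead), so the Y-degree is additive (size_psiM).

   Since c commutes with x, yh + c satisfies the defining relation with x and
   the universal property provides kap.  An element of Y-degree at most 1
   commuting with x lies in F[x] because h != 0 (commutant_low_degree); hence
   yh + c has Y-degree at least 1, and at least 2 when c is not in F[x].  As
   kap multiplies Y-degrees by that of yh + c (size_kap_Phi), it is injective,
   and yh, of Y-degree 1, has no preimage when c is not in F[x]. *)

Section PolynomialEvaluation.
Variables (F : fieldType) (A : algType F) (a : A).

Lemma pevD r s : pev (r + s) a = pev r a + pev s a.
Proof. exact: rmorphD. Qed.
Lemma pevM r s : pev (r * s) a = pev r a * pev s a.
Proof. exact: rmorphM. Qed.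
Lemma pevX : pev 'X a = a.
Proof. exact: horner_algX. Qed.
Lemma pevC k : pev k%:P a = k%:A.
Proof. exact: horner_algC. Qed.
Lemma pev_commX r : pev r a * a = a * pev r a.
Proof. by rewrite -[X in _ * X = _]pevX -[X in _ = X * _]pevX -!pevM mulrC. Qed.

End PolynomialEvaluation.

Section AlgebraHomomorphisms.
Variables (F : fieldType) (A B : algType F) (f : A -> B).
Hypothesis f_hom : is_alg_hom f.

Lemma alg_hom0 : f 0 = 0.
Proof.
case: f_hom => fD _ _ _; apply: (addrI (f 0)).
by rewrite -fD !addr0.
Qed.

Lemma alg_homN a : f (- a) = - f a.
Proof.
case: f_hom => fD _ _ _; apply/eqP.
by rewrite -subr_eq0 opprK -fD addNr alg_hom0.
Qed.

Lemma alg_hom_pev r a : f (pev r a) = pev r (f a).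
Proof.
case: f_hom => fD fM f1 fZ; elim/poly_ind: r => [|r k IH].
  by rewrite /pev !rmorph0 alg_hom0.
by rewrite !(pevD, pevM, pevX, pevC) fD fM fZ f1 IH.
Qed.

Lemma alg_hom_commutator a b : f (a * b - b * a) = f a * f b - f b * f a.
Proof. by case: f_hom => fD fM _ _; rewrite fD alg_homN !fM. Qed.

Lemma conj_alg_hom (u v : B) : u * v = 1 -> v * u = 1 ->
  is_alg_hom (fun a => v * f a * u).
Proof.
move=> uv vu; case: f_hom => fD fM f1 fZ; split.
- by move=> a b; rewrite fD mulrDr mulrDl.
- by move=> a b; rewrite fM !mulrA -(mulrA _ u v) uv mulr1.
- by rewrite f1 mulr1.
- by move=> k a; rewrite fZ -scalerAr -scalerAl.
Qed.

End AlgebraHomomorphisms.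

Lemma commutator_shift (R : ringType) (u v c : R) :
  c * u = u * c -> (v + c) * u - u * (v + c) = v * u - u * v.
Proof. by move=> cu; rewrite mulrDl mulrDr cu opprD addrACA subrr addr0. Qed.

Lemma commutator_left_multiple (R : ringType) (u v q : R) :
  q * u = u * q -> (q * v) * u - u * (q * v) = q * (v * u - u * v).
Proof. by move=> qu; rewrite mulrBr !mulrA qu. Qed.

Section EndomorphismAlgebra.
Variables (F : fieldType) (V : lmodType F).

Record linmap := Linmap { linmap_fun :> V -> V; linmap_lin : linear linmap_fun }.

Lemma linmapP (f g : linmap) : f =1 g -> f = g.
Proof.
case: f g => f fL [g gL] /= /funext efg; subst g.
by rewrite (Prop_irrelevance fL gL).
Qed.

Lemma linmapD (f : linmap) : {morph f : u v / u + v}.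
Proof. by move=> u v; have := linmap_lin f 1 u v; rewrite !scale1r. Qed.

Lemma linmap0 (f : linmap) : f 0 = 0.
Proof. by apply: (addrI (f 0)); rewrite -linmapD !addr0. Qed.

Lemma linmapZ (f : linmap) k u : f (k *: u) = k *: f u.
Proof. by have := linmap_lin f k u 0; rewrite !addr0 linmap0 addr0. Qed.

(* The algebra End_F(V); a nonzero vector v0 witnesses that it is nontrivial. *)
Definition endo (v0 : V) of v0 != 0 := linmap.

Variables (v0 : V) (v0_neq0 : v0 != 0).
Local Notation End := (endo v0_neq0).

HB.instance Definition _ := gen_eqMixin End.
HB.instance Definition _ := gen_choiceMixin End.

Definition endo_zero : End := @Linmap (fun=> 0)
  ltac:(by move=> k u v; rewrite scaler0 addr0).
Definition endo_add (f g : End) : End := @Linmap (fun v => f v + g v)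
  ltac:(by move=> k u v; rewrite !linmapD !linmapZ scalerDr addrACA).
Definition endo_opp (f : End) : End := @Linmap (fun v => - f v)
  ltac:(by move=> k u v; rewrite linmapD linmapZ opprD scalerN).
Definition endo_one : End := @Linmap id ltac:(by []).
Definition endo_mul (f g : End) : End := @Linmap (fun v => f (g v))
  ltac:(by move=> k u v; rewrite !linmapD !linmapZ).
Definition endo_scale (k : F) (f : End) : End := @Linmap (fun v => k *: f v)
  ltac:(by move=> l u v; rewrite linmapD linmapZ scalerDr !scalerA mulrC).

Lemma endo_addA : associative endo_add.
Proof. by move=> f g e; apply: linmapP => v /=; rewrite addrA. Qed.
Lemma endo_addC : commutative endo_add.
Proof. by move=> f g; apply: linmapP => v /=; rewrite addrC. Qed.
Lemma endo_add0 : left_id endo_zero endo_add.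
Proof. by move=> f; apply: linmapP => v /=; rewrite add0r. Qed.
Lemma endo_addN : left_inverse endo_zero endo_opp endo_add.
Proof. by move=> f; apply: linmapP => v /=; rewrite addNr. Qed.
HB.instance Definition _ :=
  GRing.isZmodule.Build End endo_addA endo_addC endo_add0 endo_addN.

Lemma endo_mulA : associative endo_mul. Proof. by move=> *; apply: linmapP. Qed.
Lemma endo_mul1 : left_id endo_one endo_mul. Proof. by move=> *; apply: linmapP. Qed.
Lemma endo_mulr1 : right_id endo_one endo_mul. Proof. by move=> *; apply: linmapP. Qed.
Lemma endo_mulDl : left_distributive endo_mul +%R.
Proof. by move=> *; apply: linmapP. Qed.
Lemma endo_mulDr : right_distributive endo_mul +%R.
Proof. by move=> f g e; apply: linmapP => v /=; rewrite linmapD. Qed.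
Lemma endo_one_neq0 : endo_one != 0.
Proof.
apply/eqP => /(congr1 (fun f : End => f v0)) /= v00.
by move: v0_neq0; rewrite v00 eqxx.
Qed.
HB.instance Definition _ := GRing.Zmodule_isNzRing.Build End
  endo_mulA endo_mul1 endo_mulr1 endo_mulDl endo_mulDr endo_one_neq0.

Lemma endo_scaleA a b (f : End) : endo_scale a (endo_scale b f) = endo_scale (a * b) f.
Proof. by apply: linmapP => v /=; rewrite scalerA. Qed.
Lemma endo_scale1 : left_id 1 endo_scale.
Proof. by move=> f; apply: linmapP => v /=; rewrite scale1r. Qed.
Lemma endo_scaleDr : right_distributive endo_scale +%R.
Proof. by move=> a f g; apply: linmapP => v /=; rewrite scalerDr. Qed.
Lemma endo_scaleDl (f : End) : {morph endo_scale^~ f : a b / a + b}.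
Proof. by move=> a b; apply: linmapP => v /=; rewrite scalerDl. Qed.
HB.instance Definition _ := GRing.Zmodule_isLmodule.Build F End
  endo_scaleA endo_scale1 endo_scaleDr endo_scaleDl.

Lemma endo_scaleAl (a : F) (f g : End) : a *: (f * g) = (a *: f) * g.
Proof. by apply: linmapP. Qed.
HB.instance Definition _ := GRing.Lmodule_isLalgebra.Build F End endo_scaleAl.
Lemma endo_scaleAr (a : F) (f g : End) : a *: (f * g) = f * (a *: g).
Proof. by apply: linmapP => v /=; rewrite linmapZ. Qed.
HB.instance Definition _ := GRing.Lalgebra_isAlgebra.Build F End endo_scaleAr.

End EndomorphismAlgebra.


(* F[x][Y] viewed as an F-vector space: the model of A_h in normal form. *)
Definition bipoly (F : fieldType) := {poly {poly F}}.
HB.instance Definition _ (F : fieldType) := GRing.Zmodule.on (bipoly F).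

Section BipolyModule.
Variable F : fieldType.
Definition bipoly_scale (k : F) (P : bipoly F) : bipoly F := k%:P%:P * (P : {poly _}).
Lemma bipoly_scaleA a b P : bipoly_scale a (bipoly_scale b P) = bipoly_scale (a * b) P.
Proof. by rewrite /bipoly_scale mulrA -!polyCM. Qed.
Lemma bipoly_scale1 : left_id 1 bipoly_scale.
Proof. by move=> P; rewrite /bipoly_scale !polyC1 mul1r. Qed.
Lemma bipoly_scaleDr : right_distributive bipoly_scale +%R.
Proof. by move=> a P Q; rewrite /bipoly_scale mulrDr. Qed.
Lemma bipoly_scaleDl P : {morph bipoly_scale^~ P : a b / a + b}.
Proof. by move=> a b; rewrite /bipoly_scale !polyCD mulrDl. Qed.
HB.instance Definition _ := GRing.Zmodule_isLmodule.Build F (bipoly F)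
  bipoly_scaleA bipoly_scale1 bipoly_scaleDr bipoly_scaleDl.

Lemma bipoly_scaleE k (P : bipoly F) : k *: P = k%:P%:P * (P : {poly _}).
Proof. by []. Qed.

Lemma bipoly1_neq0 : (1 : bipoly F) != 0.
Proof. exact: oner_neq0. Qed.
End BipolyModule.

Section NormalForm.
Variables (F : fieldType) (h : {poly F}) (A : algType F) (x yh : A).
Hypothesis Ah : is_Ah h x yh.
Local Notation PP := {poly {poly F}}.

Definition Phi (P : PP) : A := (map_poly (horner_alg x) P).[yh].

Lemma PhiD P Q : Phi (P + Q) = Phi P + Phi Q.
Proof. by rewrite /Phi rmorphD hornerD. Qed.

Lemma Phi0 : Phi 0 = 0.
Proof. by rewrite /Phi rmorph0 horner0. Qed.

Lemma Phi_CM r P : Phi (r%:P * P) = pev r x * Phi P.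
Proof. by rewrite /Phi rmorphM /= map_polyC hornerCM. Qed.

Lemma PhiC r : Phi r%:P = pev r x.
Proof. by rewrite /Phi map_polyC hornerC. Qed.

Lemma Phi_MXaddC P r : Phi (P * 'X + r%:P) = Phi P * yh + pev r x.
Proof. by rewrite /Phi rmorphD rmorphM /= map_polyX map_polyC hornerMXaddC. Qed.

Lemma PhiX : Phi 'X = yh.
Proof. by rewrite /Phi map_polyX hornerX. Qed.

Lemma Ah_rel : yh * x - x * yh = pev h x.
Proof. by case: Ah. Qed.

Lemma yh_commutator q : yh * pev q x - pev q x * yh = pev (h * q^`()) x.
Proof.
elim/poly_ind: q => [|q k IH].
  by rewrite deriv0 mulr0 /pev !rmorph0 mulr0 mul0r subrr.
have -> : h * (q * 'X + k%:P)^`() = h * q^`() * 'X + q * h.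
  by rewrite derivMXaddC; ring.
rewrite !pevD !pevM -[pev h x * _]pevM -IH -Ah_rel pevX pevC.
rewrite mulrDr mulrDl mulr_algr mulr_algl opprD addrACA subrr addr0.
by rewrite mulrBl mulrBr !mulrA addrA subrK.
Qed.

Lemma yh_pev q : yh * pev q x = pev q x * yh + pev (h * q^`()) x.
Proof. by rewrite -yh_commutator addrC subrK. Qed.

Definition hderiv (P : PP) : PP := map_poly (fun q => h * q^`()) P.

Lemma coef_hderiv P i : (hderiv P)`_i = h * (P`_i)^`().
Proof. by rewrite coef_map_id0 // deriv0 mulr0. Qed.

Lemma hderivD P Q : hderiv (P + Q) = hderiv P + hderiv Q.
Proof. by apply/polyP => i; rewrite coefD !coef_hderiv coefD derivD mulrDr. Qed.

Lemma hderiv_CM (k : F) P : hderiv (k%:P%:P * P) = k%:P%:P * hderiv P.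
Proof.
apply/polyP => i; rewrite !(coefCM, coef_hderiv) derivM derivC mul0r add0r.
by rewrite mulrCA.
Qed.

Lemma hderiv_XM P : hderiv ('X%:P * P) = 'X%:P * hderiv P + h%:P * P.
Proof.
apply/polyP => i; rewrite !(coefD, coefCM, coef_hderiv) derivM derivX mul1r.
by rewrite mulrDr mulrCA addrC.
Qed.

Lemma hderiv_MXaddC P r : hderiv (P * 'X + r%:P) = hderiv P * 'X + (h * r^`())%:P.
Proof.
apply/polyP => i; rewrite !coefD !coefMX !coefC coef_hderiv coefD coefMX coefC.
by case: i => [|i] /=; rewrite ?coef_hderiv ?deriv0 ?mulr0 ?add0r ?addr0.
Qed.

Lemma hderiv1 : hderiv 1 = 0.
Proof.
apply/polyP => i; rewrite coef_hderiv coef1 coef0.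
by case: (i == 0)%N; rewrite ?derivC ?deriv0 mulr0.
Qed.

Lemma size_hderiv P : (size (hderiv P) <= size P)%N.
Proof.
apply/leq_sizeP => i le_P_i.
by rewrite coef_hderiv (leq_sizeP _ _ (leqnn _)) // deriv0 mulr0.
Qed.

Definition yh_act (P : PP) : PP := hderiv P + P * 'X.

Lemma Phi_yh_act P : Phi (yh_act P) = yh * Phi P.
Proof.
elim/poly_ind: P => [|P r IH].
  by rewrite /yh_act mul0r addr0 /hderiv map_poly0 Phi0 mulr0.
have -> : yh_act (P * 'X + r%:P) = yh_act P * 'X + (h * r^`())%:P + r%:P * 'X.
  by rewrite /yh_act hderiv_MXaddC; ring.
rewrite PhiD !Phi_MXaddC Phi_CM PhiX IH mulrDr yh_pev mulrA.
by rewrite addrAC addrA.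
Qed.

Lemma size_yh_act P : (size (yh_act P) <= (size P).+1)%N.
Proof.
apply: leq_trans (size_polyD _ _) _; rewrite geq_max (leq_trans (size_hderiv P)) //=.
by apply: leq_trans (size_polyMleq _ _) _; rewrite size_polyX addn2.
Qed.

Local Notation End := (endo (bipoly1_neq0 F)).

Lemma xmul_lin : linear (fun P : bipoly F => 'X%:P * (P : PP) : bipoly F).
Proof. by move=> k P Q; rewrite !bipoly_scaleE mulrDr mulrCA. Qed.

Lemma yh_act_lin : linear (yh_act : bipoly F -> bipoly F).
Proof.
move=> k P Q; rewrite !bipoly_scaleE /yh_act hderivD hderiv_CM mulrDl mulrDr mulrA.
by rewrite addrACA.
Qed.

Definition Xop : End := Linmap xmul_lin.
Definition Dop : End := Linmap yh_act_lin.

Lemma pev_Xop r (P : bipoly F) : (pev r Xop : End) P = r%:P * (P : PP).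
Proof.
elim/poly_ind: r P => [|r k IH] P; first by rewrite /pev rmorph0 polyC0 mul0r.
rewrite pevD pevM pevX pevC /= IH bipoly_scaleE.
by rewrite polyCD polyCM mulrDl mulrA.
Qed.

Lemma Dop_Xop_rel : Dop * Xop - Xop * Dop = pev h Xop.
Proof.
apply: linmapP => P; rewrite pev_Xop /= /yh_act hderiv_XM; ring.
Qed.

Section Representation.
Variable rho : A -> End.
Hypotheses (rho_hom : is_alg_hom rho) (rho_x : rho x = Xop) (rho_yh : rho yh = Dop).

Local Notation W := (bipoly F * A)%type.

Lemma W_neq0 : ((1, 0) : W) != 0.
Proof. by apply/eqP => /(congr1 fst) /eqP; rewrite /= (negPf (bipoly1_neq0 F)). Qed.
Local Notation EndW := (endo W_neq0).

Lemma pair_act_lin a : linear (fun w : W => (rho a w.1, a * w.2) : W).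
Proof. by move=> k u v; rewrite /= linmapD linmapZ mulrDr -scalerAr. Qed.
Definition pair_act a : EndW := Linmap (pair_act_lin a).

Lemma pair_act_hom : is_alg_hom pair_act.
Proof.
case: rho_hom => rD rM r1 rZ; split.
- by move=> a b; apply: linmapP => -[P c]; rewrite /= rD mulrDl.
- by move=> a b; apply: linmapP => -[P c]; rewrite /= rM mulrA.
- by apply: linmapP => -[P c]; rewrite /= r1 mul1r.
- by move=> k a; apply: linmapP => -[P c]; rewrite /= rZ -scalerAl.
Qed.

Lemma shear_lin (s : F) : linear (fun w : W => (w.1, w.2 + s *: Phi w.1) : W).
Proof.
move=> k [P b] [Q c]; congr (_, _) => /=.
by rewrite bipoly_scaleE PhiD Phi_CM pevC mulr_algl !scalerDr scalerA mulrC -scalerA addrACA.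
Qed.
Definition shear s : EndW := Linmap (shear_lin s).

Lemma shearK s t : s + t = 0 -> shear s * shear t = 1.
Proof.
move=> st; apply: linmapP => -[P b].
by rewrite /= -addrA -scalerDl [t + s]addrC st scale0r addr0.
Qed.

(* Uniqueness in the universal property identifies pair_act with its conjugate
   by the shear; reading off the second component gives the intertwining law. *)
Lemma Phi_rho a P : Phi (rho a P) = a * Phi P.
Proof.
have rel : pair_act yh * pair_act x - pair_act x * pair_act yh = pev h (pair_act x).
  by rewrite -alg_hom_commutator ?Ah_rel ?alg_hom_pev //; exact: pair_act_hom.
have [_ uniq] := Ah.2 _ _ _ rel.
have conj_hom := conj_alg_hom pair_act_hom (shearK (subrr 1)) (shearK (addNr 1)).
have conjE : forall a, pair_act a = shear (-1) * pair_act a * shear 1.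
  apply: uniq pair_act_hom conj_hom _ _; apply: linmapP => -[Q b] /=;
    rewrite scaleN1r scale1r mulrDr.
    by rewrite rho_x /= Phi_CM pevX addrK.
  by rewrite rho_yh /= Phi_yh_act addrK.
move: (congr1 (fun f : EndW => (f (P, 0)).2) (conjE a)).
by rewrite /= mulr0 add0r scaleN1r scale1r => /eqP; rewrite eq_sym subr_eq0 => /eqP.
Qed.

Lemma hderiv_MX P : hderiv (P * 'X) = hderiv P * 'X.
Proof. by have := hderiv_MXaddC P 0; rewrite deriv0 mulr0 polyC0 !addr0. Qed.

Lemma rho_Phi P R : hderiv R = 0 -> rho (Phi P) R = P * R.
Proof.
case: (rho_hom) => rD rM _ _; elim/poly_ind: P R => [|P r IH] R R_const.
  by rewrite Phi0 alg_hom0 // mul0r.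
rewrite Phi_MXaddC rD rM alg_hom_pev // rho_yh rho_x /= pev_Xop /yh_act R_const add0r.
by rewrite IH ?hderiv_MX ?R_const ?mul0r // mulrDl mulrAC mulrA.
Qed.

End Representation.

Theorem Phi_bijective : bijective Phi.
Proof.
have [[rho [rho_hom [rho_x rho_yh]]] _] := Ah.2 _ _ _ Dop_Xop_rel.
exists (fun a => rho a 1) => [P | a]; first by rewrite rho_Phi ?mulr1 ?hderiv1.
by rewrite (Phi_rho rho_hom rho_x rho_yh) -polyC1 PhiC pevC scale1r mulr1.
Qed.

Lemma Phi_mul_lead P Q :
  exists2 R, Phi P * Phi Q = Phi (P * Q + R) & (size R <= (size P + size Q).-2)%N.
Proof.
elim/poly_ind: P Q => [|P r IH] Q.
  by exists 0; rewrite ?Phi0 ?mul0r ?addr0 ?Phi0 ?size_poly0.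
have [-> | P_neq0] := eqVneq P 0.
  by exists 0; rewrite ?size_poly0 // mul0r add0r addr0 PhiC Phi_CM.
have [R eR sR] := IH (yh_act Q).
exists (P * hderiv Q + R).
  rewrite Phi_MXaddC mulrDl -mulrA -Phi_yh_act eR -Phi_CM -PhiD.
  by congr Phi; rewrite /yh_act; ring.
rewrite size_MXaddC (negPf P_neq0) /=.
apply: leq_trans (size_polyD _ _) _; rewrite geq_max.
move: (size_polyMleq P (hderiv Q)) (size_hderiv Q) (size_yh_act Q) sR (size_poly_gt0 P).
rewrite P_neq0; move: (size (P * hderiv Q)) (size (hderiv Q)) (size (yh_act Q)).
by move: (size R) (size P) (size Q) => sr sp sq spd sd sy; lia.
Qed.

Section NormalFormMap.
Variable psi : A -> PP.
Hypotheses (PhiK : cancel Phi psi) (psiK : cancel psi Phi).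
Hypothesis h_neq0 : h != 0.

Lemma psiD a b : psi (a + b) = psi a + psi b.
Proof. by rewrite -{1}(psiK a) -{1}(psiK b) -PhiD PhiK. Qed.

Lemma psi_pev r : psi (pev r x) = r%:P.
Proof. by rewrite -PhiC PhiK. Qed.

Lemma psi_yh : psi yh = 'X.
Proof. by rewrite -PhiX PhiK. Qed.

Lemma psi0 : psi 0 = 0.
Proof. by rewrite -Phi0 PhiK. Qed.

Lemma psi_eq0 a : (psi a == 0) = (a == 0).
Proof.
apply/eqP/eqP => [psia0 | ->]; last exact: psi0.
by rewrite -[a]psiK psia0 Phi0.
Qed.

Lemma size_psiM a b : a != 0 -> b != 0 ->
  size (psi (a * b)) = (size (psi a) + size (psi b)).-1.
Proof.
rewrite -!psi_eq0 -!size_poly_gt0 => a_gt0 b_gt0.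
have [R eR sR] := Phi_mul_lead (psi a) (psi b); rewrite !psiK in eR.
have sab : size (psi a * psi b) = (size (psi a) + size (psi b)).-1.
  by rewrite size_mul // -size_poly_gt0.
rewrite eR PhiK size_polyDl sab //.
by move: sR a_gt0 b_gt0; move: (size R) (size (psi a)) (size (psi b)) => r m n; lia.
Qed.

Lemma commutant_low_degree c : c * x = x * c -> (size (psi c) <= 2)%N ->
  exists r, c = pev r x.
Proof.
move=> c_x small; set P := psi c.
have eP : P = (P`_1)%:P * 'X + (P`_0)%:P.
  apply/polyP => -[|[|i]]; rewrite coefD coefMX !coefC /= ?add0r ?addr0 //.
  by rewrite nth_default // (leq_trans small).
have ec : c = pev P`_1 x * yh + pev P`_0 x by rewrite -[c]psiK -/P {1}eP Phi_MXaddC PhiC.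
have : pev (P`_1 * h) x = 0.
  rewrite -(subrr (x * c)) -[in X in X - _]c_x {1 2}ec commutator_shift ?pev_commX //.
  by rewrite commutator_left_multiple ?pev_commX // Ah_rel pevM.
move=> /(congr1 psi); rewrite psi_pev psi0 => /eqP.
rewrite polyC_eq0 mulf_eq0 (negPf h_neq0) orbF => /eqP P1_0.
by exists P`_0; rewrite ec P1_0 /pev rmorph0 mul0r add0r.
Qed.

Section Shift.
Variables (c : A) (kap : A -> A).
Hypotheses (c_x : c * x = x * c) (kap_hom : is_alg_hom kap).
Hypotheses (kap_x : kap x = x) (kap_yh : kap yh = yh + c).

Local Notation w := (psi (yh + c)).

Lemma size_shift_gt1 : (1 < size w)%N.
Proof.
rewrite psiD psi_yh; have [small | big] := leqP (size (psi c)) 2.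
  by have [r ->] := commutant_low_degree c_x small; rewrite psi_pev size_XaddC.
by rewrite addrC size_polyDl ?size_polyX // (ltn_trans _ big).
Qed.

Lemma size_shift_gt2 : ~ (exists r, c = pev r x) -> (2 < size w)%N.
Proof.
move=> c_notin; rewrite psiD psi_yh ltnNge.
have [small | big] := leqP (size (psi c)) 2.
  by case: c_notin; exact: commutant_low_degree.
by rewrite addrC size_polyDl ?size_polyX // -ltnNge.
Qed.

Lemma size_kap_Phi P : P != 0 ->
  size (psi (kap (Phi P))) = ((size P).-1 * (size w).-1).+1.
Proof.
have w_gt1 := size_shift_gt1.
have w_neq0 : yh + c != 0 by rewrite -psi_eq0 -size_poly_gt0 (ltn_trans _ w_gt1).
case: (kap_hom) => kapD kapM _ _; elim/poly_ind: P => [|P r IH]; first by rewrite eqxx.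
rewrite Phi_MXaddC kapD kapM alg_hom_pev // kap_x kap_yh psiD psi_pev => P_neq0.
have [P0 | {}P_neq0] := eqVneq P 0.
  move: P_neq0; rewrite P0 mul0r add0r polyC_eq0 => r_neq0.
  by rewrite Phi0 alg_hom0 // mul0r psi0 add0r size_polyC r_neq0.
have {}IH := IH P_neq0; set b := kap (Phi P) in IH *.
have b_neq0 : b != 0 by rewrite -psi_eq0 -size_poly_gt0 IH.
rewrite size_MXaddC (negPf P_neq0) /= size_polyDl size_psiM // IH.
  by move: w_gt1 (size_poly_gt0 P); rewrite P_neq0; move: (size w) (size P) => m n; nia.
by apply: leq_ltn_trans (size_polyC_leq1 r) _; move: w_gt1; move: (size w) => m; lia.
Qed.

(* A nonzero difference would have a nonzero image by size_kap_Phi. *)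
Lemma kap_injective : injective kap.
Proof.
move=> a b kab; apply/eqP; rewrite -subr_eq0 -psi_eq0; apply/negPn/negP => d_neq0.
have := size_kap_Phi d_neq0; rewrite psiK.
by case: kap_hom => kapD _ _ _; rewrite kapD alg_homN // kab subrr psi0 size_poly0.
Qed.

(* yh, of Y-degree 1, is not in the image when deg_Y (yh + c) >= 2. *)
Lemma kap_not_bijective : ~ (exists r, c = pev r x) -> ~ bijective kap.
Proof.
move=> /size_shift_gt2 w_gt2 [kinv _ kinvK].
have kinv_neq0 : psi (kinv yh) != 0.
  rewrite psi_eq0; apply/eqP => kinv0; move: (kinvK yh).
  rewrite kinv0 alg_hom0 // => /(congr1 psi); rewrite psi0 psi_yh => /eqP.
  by rewrite eq_sym polyX_eq0.
have := size_kap_Phi kinv_neq0; rewrite psiK kinvK psi_yh size_polyX.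
by move: w_gt2; move: (size w) (size (psi (kinv yh))) => m n; nia.
Qed.

End Shift.

End NormalFormMap.

End NormalForm.

Theorem proposition8p15 (F : fieldType) (p : nat) (h : {poly F})
  (A : algType F) (x yh : A) (c : A) :
  p \in [pchar F] -> (1 < size h)%N -> is_Ah h x yh ->
  c * x = x * c ->
  exists kappa : A -> A,
    [/\ is_alg_hom kappa, injective kappa, kappa yh = yh + c,
        (forall r : {poly F}, kappa (pev r x) = pev r x) &
        ((~ exists r : {poly F}, c = pev r x) -> ~ bijective kappa)].
Proof.
move=> _ h_gt1 Ah c_x.
have h_neq0 : h != 0 by rewrite -size_poly_gt0 (ltn_trans _ h_gt1).
have [psi PhiK psiK] := Phi_bijective Ah.
have shift_rel : (yh + c) * x - x * (yh + c) = pev h x.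
  by rewrite commutator_shift // (Ah_rel Ah).
have [[kap [kap_hom [kap_x kap_yh]]] _] := Ah.2 A x (yh + c) shift_rel.
have kap_inj := kap_injective Ah PhiK psiK h_neq0 c_x kap_hom kap_x kap_yh.
have kap_not_bij := kap_not_bijective Ah PhiK psiK h_neq0 c_x kap_hom kap_x kap_yh.
exists kap; split => // r.
by rewrite alg_hom_pev // kap_x.
Qed.
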